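(* Fix total velocities $(\overline{u}_{T,k+1/2})_{k=1}^4\in\mathbb{R}^4$. Then for each phase $\ell\in\{w,\textit{nw}\}$, each $k\in\{1,\dots,4\}$ and each $j\in\{1,\dots,4\}$ with $j\neq k$, $$\frac{\partial\big(\overline{V}_{\ell,k+1/2}-\overline{V}_{\ell,k-1/2}\big)}{\partial S_{\ell,j}}\le 0 .$$
   Context: Indices in $\{1,2,3,4\}$ are cyclic mod 4 (vertices of an interaction region, labeled counterclockwise; half-interface $k+1/2$ joins vertex $k$ to vertex $k+1$, and $\overline{u}_{T,k+1/2}>0$ means flow from $k$ to $k+1$). $S_j$ is the wetting saturation at vertex $j$; $S_{w,j}=S_j$, $S_{\textit{nw},j}=1-S_j$, so $\partial/\partial S_{\textit{nw},j}=-\partial/\partial S_j$. Mobilities $\lambda_w,\lambda_{\textit{nw}}$ are positive differentiable functions of $S$, with $\lambda_w$ nondecreasing and $\lambda_{\textit{nw}}$ nonincreasing in $S$; $\lambda_T=\lambda_w+\lambda_{\textit{nw}}$; $\chi_{\ell,j}=\lambda_\ell(S_j)/\lambda_T(S_j)$, $\boldsymbol{\chi}_\ell=(\chi_{\ell,1},\dots,\chi_{\ell,4})^T$. Limiter $\varphi(r)=\dfrac{r^4+r^3+r^2+r}{r^4+r^3+r^2+r+1}$, $r\ge0$. $\overline{\omega}^V_{k+1/2}=\varphi(\max(0,\overline{u}_{T,k-1/2}/\overline{u}_{T,k+1/2}))$ if $\overline{u}_{T,k+1/2}>0$, $=\varphi(\max(0,\overline{u}_{T,k+3/2}/\overline{u}_{T,k+1/2}))$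 if $\overline{u}_{T,k+1/2}<0$, $=0$ otherwise. $\boldsymbol{A}$: $a_{kk}=1$, $a_{k,k-1}=-\overline{\omega}^V_{k+1/2}$ if $\overline{u}_{T,k+1/2}\ge0$ (else $0$), $a_{k,k+1}=-\overline{\omega}^V_{k+1/2}$ if $\overline{u}_{T,k+1/2}<0$ (else $0$), other entries $0$. $\boldsymbol{B}$: $b_{kk}=1-\overline{\omega}^V_{k+1/2}$ if $\overline{u}_{T,k+1/2}\ge0$ (else $0$), $b_{k,k+1}=1-\overline{\omega}^V_{k+1/2}$ if $\overline{u}_{T,k+1/2}<0$ (else $0$), other entries $0$. The interfacial mobility ratios are $\overline{\boldsymbol{\chi}}_\ell=\boldsymbol{A}^{-1}\boldsymbol{B}\boldsymbol{\chi}_\ell$ with entries $\overline{\chi}_{\ell,k+1/2}$, and the viscous flux is $\overline{V}_{\ell,k+1/2}=\overline{\chi}_{\ell,k+1/2}\overline{u}_{T,k+1/2}$. The total velocities (hence $\boldsymbol{A},\boldsymbol{B}$) are held fixed when differentiating. *)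

From Stdlib Require Import Reals Lra.
Open Scope R_scope.

(* Indices: vertex 1..4 of the paper is 0..3 here, cyclic mod 4.
   Interface k (0<=k<4) is the half-interface "k+1/2" joining vertex k
   to vertex (k+1) mod 4; u k is  \overline{u}_{T,k+1/2}. *)
Definition prv (k : nat) : nat := (k + 3) mod 4.
Definition nxt (k : nat) : nat := (k + 1) mod 4.

Definition sum4 (f : nat -> R) : R := f 0%nat + f 1%nat + f 2%nat + f 3%nat.

Definition phi (r : R) : R :=
  (r ^ 4 + r ^ 3 + r ^ 2 + r) / (r ^ 4 + r ^ 3 + r ^ 2 + r + 1).

Definition omegaV (u : nat -> R) (k : nat) : R :=
  if Rlt_dec 0 (u k) then phi (Rmax 0 (u (prv k) / u k))
  else if Rlt_dec (u k) 0 then phi (Rmax 0 (u (nxt k) / u k))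
  else 0.

Definition matA (u : nat -> R) (k i : nat) : R :=
  if Nat.eqb i k then 1
  else if Rle_dec 0 (u k) then (if Nat.eqb i (prv k) then - omegaV u k else 0)
  else (if Nat.eqb i (nxt k) then - omegaV u k else 0).

Definition matB (u : nat -> R) (k i : nat) : R :=
  if Rle_dec 0 (u k) then (if Nat.eqb i k then 1 - omegaV u k else 0)
  else (if Nat.eqb i (nxt k) then 1 - omegaV u k else 0).

Definition det3 (m : nat -> nat -> R) (r0 r1 r2 c0 c1 c2 : nat) : R :=
  m r0 c0 * (m r1 c1 * m r2 c2 - m r1 c2 * m r2 c1)
  - m r0 c1 * (m r1 c0 * m r2 c2 - m r1 c2 * m r2 c0)
  + m r0 c2 * (m r1 c0 * m r2 c1 - m r1 c1 * m r2 c0).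

(* oth i p = p-th (p=0,1,2) element of {0,1,2,3} \ {i}, increasing *)
Definition oth (i p : nat) : nat := if Nat.ltb p i then p else S p.

Definition cofactor4 (m : nat -> nat -> R) (i j : nat) : R :=
  (-1) ^ (i + j) *
  det3 m (oth i 0) (oth i 1) (oth i 2) (oth j 0) (oth j 1) (oth j 2).

Definition det4 (m : nat -> nat -> R) : R :=
  sum4 (fun j => m 0%nat j * cofactor4 m 0 j).

Definition inv4 (m : nat -> nat -> R) (i j : nat) : R :=
  cofactor4 m j i / det4 m.

Inductive phase := w | nw.

Definition mob (lw lnw : R -> R) (l : phase) : R -> R :=
  match l with w => lw | nw => lnw end.

Definition chi (lw lnw : R -> R) (l : phase) (S : nat -> R) (j : nat) : R :=
  mob lw lnw l (S j) / (lw (S j) + lnw (S j)).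

Definition chibar (u : nat -> R) (lw lnw : R -> R) (l : phase)
  (S : nat -> R) (k : nat) : R :=
  sum4 (fun i => inv4 (matA u) k i *
                 sum4 (fun m => matB u i m * chi lw lnw l S m)).

Definition Vbar (u : nat -> R) (lw lnw : R -> R) (l : phase)
  (S : nat -> R) (k : nat) : R :=
  chibar u lw lnw l S k * u k.

Definition upd (S : nat -> R) (j : nat) (s : R) : nat -> R :=
  fun m => if Nat.eqb m j then s else S m.

(* phase saturation at vertex j: S_{w,j} = S_j, S_{nw,j} = 1 - S_j;
   wet_of l x recovers S_j from S_{l,j} = x *)
Definition wet_of (l : phase) (x : R) : R :=
  match l with w => x | nw => 1 - x end.
Definition phase_sat (l : phase) (Sj : R) : R :=
  match l with w => Sj | nw => 1 - Sj end.

From Stdlib Require Import Reals Lra Lia.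
Open Scope R_scope.

(* Only S_j moves, so every interfacial flux is affine in the mobility
   ratio chi_{l,j}, with slope u_k (A^-1 B)_{kj}.  The mobility ratio is
   nondecreasing in the phase saturation, so it suffices that the slope
   difference u_k (A^-1 B)_{kj} - u_{k-1} (A^-1 B)_{k-1,j} is nonpositive.
   Row i of A reads y_i - omega_i y_{up(i)}, where up(i) is the upwind
   neighbour and 0 <= omega_i < 1, and B >= 0; a discrete minimum principle
   therefore makes the column y = A^-1 B e_j nonnegative.  Since j <> k, row k
   of B vanishes in column j when the flow at k is forward (and likewise row
   k-1 when the flow there is backward), which links y_k to y_{k-1}; the bound
   phi(r) <= r of the limiter then controls the resulting upwind combinations
   in each of the four sign cases. *)

Lemma cofactor4_expansion M i n : (i < 4)%nat -> (n < 4)%nat ->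
  sum4 (fun p => M i p * cofactor4 M n p) = if Nat.eqb i n then det4 M else 0.
Proof.
  intros Hi Hn.
  destruct i as [|[|[|[|i]]]]; try lia; destruct n as [|[|[|[|n]]]]; try lia;
    unfold det4, sum4, cofactor4, det3, oth; simpl; ring.
Qed.

Lemma mul_inv4 M i n : det4 M <> 0 -> (i < 4)%nat -> (n < 4)%nat ->
  sum4 (fun m => M i m * inv4 M m n) = if Nat.eqb i n then 1 else 0.
Proof.
  intros Hd Hi Hn.
  assert (E : sum4 (fun m => M i m * inv4 M m n)
            = sum4 (fun p => M i p * cofactor4 M n p) / det4 M)
    by (unfold sum4, inv4; field; auto).
  rewrite E, cofactor4_expansion by auto.
  destruct (Nat.eqb i n); field; auto.
Qed.

Lemma mul_inv4_vec M b i : det4 M <> 0 -> (i < 4)%nat ->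
  sum4 (fun m => M i m * sum4 (fun n => inv4 M m n * b n)) = b i.
Proof.
  intros Hd Hi.
  transitivity (sum4 (fun n => sum4 (fun m => M i m * inv4 M m n) * b n)).
  { unfold sum4; ring. }
  unfold sum4 at 1; cbv beta.
  rewrite !mul_inv4 by (auto; lia).
  destruct i as [|[|[|[|i]]]]; try lia; simpl; ring.
Qed.

Lemma exists_argmin (y : nat -> R) n :
  exists m, (m <= n)%nat /\ forall i, (i <= n)%nat -> y m <= y i.
Proof.
  induction n as [|n [m [Hm Hmin]]].
  - exists 0%nat; split; [lia|].
    intros i Hi; replace i with 0%nat by lia; lra.
  - destruct (Rle_dec (y m) (y (S n))) as [Hle|Hgt].
    + exists m; split; [lia|].
      intros i Hi; destruct (Nat.eq_dec i (S n)) as [->|]; [lra|].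
      apply Hmin; lia.
    + exists (S n); split; [lia|].
      intros i Hi; destruct (Nat.eq_dec i (S n)) as [->|]; [lra|].
      specialize (Hmin i ltac:(lia)); lra.
Qed.

Lemma min_principle n (y om : nat -> R) (p : nat -> nat) :
  (forall i, (i <= n)%nat -> (p i <= n)%nat) ->
  (forall i, (i <= n)%nat -> 0 <= om i < 1) ->
  (forall i, (i <= n)%nat -> om i * y (p i) <= y i) ->
  forall i, (i <= n)%nat -> 0 <= y i.
Proof.
  intros Hp Hom Hy.
  destruct (exists_argmin y n) as [m [Hm Hmin]].
  assert (Hym : 0 <= y m).
  { pose proof (Hy m Hm); pose proof (Hmin (p m) (Hp m Hm)); pose proof (Hom m Hm).
    nra. }
  intros i Hi; specialize (Hmin i Hi); lra.
Qed.

Lemma phi0 : phi 0 = 0.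
Proof. unfold phi; simpl; field. Qed.

Lemma phi_bounds r : 0 <= r -> (0 <= phi r < 1) /\ phi r <= r.
Proof.
  intros Hr; unfold phi.
  set (N := r ^ 4 + r ^ 3 + r ^ 2 + r).
  assert (HN : 0 <= N) by (unfold N; simpl; nra).
  assert (E : N / (N + 1) * (N + 1) = N) by (field; lra).
  assert (Hi : 0 < / (N + 1)) by (apply Rinv_0_lt_compat; lra).
  split; [split|].
  - unfold Rdiv; nra.
  - apply Rmult_lt_reg_r with (N + 1); [lra|]; rewrite E; lra.
  - apply Rmult_le_reg_r with (N + 1); [lra|]; rewrite E.
    assert (0 <= r * r * r * r * r) by (repeat apply Rmult_le_pos; lra).
    unfold N; simpl; nra.
Qed.

Lemma phi_max0_mul_le x y : 0 < x -> phi (Rmax 0 (y / x)) * x <= Rmax 0 y.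
Proof.
  intros Hx.
  assert (Hix : 0 < / x) by (apply Rinv_0_lt_compat; lra).
  destruct (Rle_or_lt 0 y) as [Hy|Hy].
  - assert (Hr : 0 <= y / x) by (unfold Rdiv; nra).
    rewrite !Rmax_right by lra.
    destruct (phi_bounds _ Hr) as [_ Hle].
    assert (E : y / x * x = y) by (field; lra).
    nra.
  - rewrite Rmax_left by (unfold Rdiv; nra).
    rewrite phi0; pose proof (Rmax_l 0 y); lra.
Qed.

Lemma omegaV_range u i : 0 <= omegaV u i < 1.
Proof.
  unfold omegaV.
  destruct (Rlt_dec 0 (u i)); [|destruct (Rlt_dec (u i) 0)]; try lra;
    match goal with |- context [phi (Rmax 0 ?r)] =>
      exact (proj1 (phi_bounds (Rmax 0 r) (Rmax_l 0 r))) end.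
Qed.

Lemma omegaV_mul_le_prv u k : 0 <= u k -> omegaV u k * u k <= Rmax 0 (u (prv k)).
Proof.
  intros Hk; unfold omegaV.
  destruct (Rlt_dec 0 (u k)) as [Hpos|]; [now apply phi_max0_mul_le|].
  destruct (Rlt_dec (u k) 0); [lra|].
  pose proof (Rmax_l 0 (u (prv k))); lra.
Qed.

Lemma omegaV_mul_le_nxt u k : u k < 0 ->
  omegaV u k * - u k <= Rmax 0 (- u (nxt k)).
Proof.
  intros Hk; unfold omegaV.
  destruct (Rlt_dec 0 (u k)); [lra|].
  destruct (Rlt_dec (u k) 0); [|lra].
  replace (u (nxt k) / u k) with (- u (nxt k) / - u k) by (field; lra).
  apply phi_max0_mul_le; lra.
Qed.

Lemma matB_ge0 u i j : 0 <= matB u i j.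
Proof.
  pose proof (omegaV_range u i); unfold matB.
  repeat match goal with |- context [if ?b then _ else _] => destruct b end; lra.
Qed.

Lemma prv_lt4 i : (prv i < 4)%nat.
Proof. apply Nat.mod_upper_bound; lia. Qed.

Lemma nxt_lt4 i : (nxt i < 4)%nat.
Proof. apply Nat.mod_upper_bound; lia. Qed.

Lemma nxt_prv k : (k < 4)%nat -> nxt (prv k) = k.
Proof. intros Hk; destruct k as [|[|[|[|k]]]]; try lia; reflexivity. Qed.

Section UpwindColumn.

Variable u : nat -> R.

Definition upwind (i : nat) : nat := if Rle_dec 0 (u i) then prv i else nxt i.

Lemma upwind_lt4 i : (upwind i < 4)%nat.
Proof. unfold upwind; destruct (Rle_dec 0 (u i)); [apply prv_lt4 | apply nxt_lt4]. Qed.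

Lemma upwind_fwd i : 0 <= u i -> upwind i = prv i.
Proof. intros Hu; unfold upwind; now destruct (Rle_dec 0 (u i)). Qed.

Lemma upwind_bwd i : u i < 0 -> upwind i = nxt i.
Proof. intros Hu; unfold upwind; destruct (Rle_dec 0 (u i)); [lra | reflexivity]. Qed.

Lemma matA_row i y : (i < 4)%nat ->
  sum4 (fun m => matA u i m * y m) = y i - omegaV u i * y (upwind i).
Proof.
  intros Hi; destruct i as [|[|[|[|i]]]]; try lia;
    unfold sum4, matA, upwind; simpl;
    destruct (Rle_dec 0 (u _)); unfold prv, nxt; simpl; ring.
Qed.

Definition invAB (i j : nat) : R := sum4 (fun n => inv4 (matA u) i n * matB u n j).

(* inv4 is built from Rinv, so a singular A would give A^-1 = 0. *)
Lemma invAB_singular i j : det4 (matA u) = 0 -> invAB i j = 0.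
Proof. intros Hd; unfold invAB, inv4, Rdiv, sum4; rewrite Hd, Rinv_0; ring. Qed.

Lemma invAB_recurrence i j : det4 (matA u) <> 0 -> (i < 4)%nat ->
  invAB i j - omegaV u i * invAB (upwind i) j = matB u i j.
Proof.
  intros Hd Hi.
  rewrite <- (matA_row i (fun m => invAB m j)) by exact Hi.
  exact (mul_inv4_vec (matA u) (fun n => matB u n j) i Hd Hi).
Qed.

Lemma invAB_ge0 i j : (i < 4)%nat -> 0 <= invAB i j.
Proof.
  intros Hi.
  destruct (Req_dec (det4 (matA u)) 0) as [Hd|Hd].
  { rewrite invAB_singular by exact Hd; lra. }
  apply (min_principle 3 (fun m => invAB m j) (omegaV u) upwind); [| | | lia].
  - intros m _; pose proof (upwind_lt4 m); lia.
  - intros m _; apply omegaV_range.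
  - intros m Hm.
    pose proof (invAB_recurrence m j Hd ltac:(lia)); pose proof (matB_ge0 u m j).
    lra.
Qed.

Lemma invAB_upwind i j : (i < 4)%nat -> matB u i j = 0 ->
  invAB i j = omegaV u i * invAB (upwind i) j.
Proof.
  intros Hi HB.
  destruct (Req_dec (det4 (matA u)) 0) as [Hd|Hd].
  - rewrite !invAB_singular by exact Hd; ring.
  - pose proof (invAB_recurrence i j Hd Hi); lra.
Qed.

Lemma flux_slope_jump_le0 k j : (k < 4)%nat -> (j < 4)%nat -> j <> k ->
  u k * invAB k j - u (prv k) * invAB (prv k) j <= 0.
Proof.
  intros Hk Hj Hjk.
  set (k' := prv k).
  pose proof (invAB_ge0 k j Hk) as Hy; pose proof (invAB_ge0 k' j (prv_lt4 k)) as Hy'.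
  pose proof (omegaV_range u k) as Hw; pose proof (omegaV_range u k') as Hw'.
  assert (Hfwd : 0 <= u k -> invAB k j = omegaV u k * invAB k' j).
  { intros Hu; rewrite <- (upwind_fwd k Hu : upwind k = k').
    apply invAB_upwind; [exact Hk|].
    unfold matB; destruct (Rle_dec 0 (u k)); [|lra].
    now rewrite (proj2 (Nat.eqb_neq j k) Hjk). }
  assert (Hbwd : u k' < 0 -> invAB k' j = omegaV u k' * invAB k j).
  { intros Hu; transitivity (omegaV u k' * invAB (upwind k') j).
    - apply invAB_upwind; [apply prv_lt4|].
      unfold matB; destruct (Rle_dec 0 (u k')); [lra|].
      rewrite (nxt_prv k Hk : nxt k' = k).
      now rewrite (proj2 (Nat.eqb_neq j k) Hjk).
    - now rewrite (upwind_bwd k' Hu), (nxt_prv k Hk : nxt k' = k). }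
  destruct (Rle_or_lt 0 (u k)) as [Hu|Hu]; destruct (Rle_or_lt 0 (u k')) as [Hu'|Hu'].
  - pose proof (omegaV_mul_le_prv u k Hu) as Hb; fold k' in Hb.
    rewrite Rmax_right in Hb by exact Hu'.
    rewrite (Hfwd Hu); nra.
  - (* opposite flows meet at vertex k: y_k = omega_k omega_{k-1} y_k forces y_k = 0 *)
    pose proof (Hfwd Hu) as E; pose proof (Hbwd Hu') as E'.
    assert (Hz : invAB k j = 0) by (rewrite E' in E; nra).
    rewrite E', Hz; nra.
  - nra.
  - pose proof (omegaV_mul_le_nxt u k' Hu') as Hb.
    rewrite (nxt_prv k Hk : nxt k' = k), Rmax_right in Hb by lra.
    rewrite (Hbwd Hu'); nra.
Qed.

End UpwindColumn.

Lemma derivable_pt_lim_nondecreasing_ge0 f x d :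
  (forall a b, a <= b -> f a <= f b) -> derivable_pt_lim f x d -> 0 <= d.
Proof.
  intros Hf Hd; destruct (Rle_or_lt 0 d) as [|Hneg]; [assumption|exfalso].
  destruct (Hd (- d / 2)) as [del Hdel]; [lra|].
  pose proof (cond_pos del) as Hdel_pos.
  specialize (Hdel (del / 2) ltac:(lra) ltac:(rewrite Rabs_right; lra)).
  assert (Hq : 0 <= (f (x + del / 2) - f x) / (del / 2)).
  { pose proof (Hf x (x + del / 2) ltac:(lra)).
    unfold Rdiv; apply Rmult_le_pos; [lra|].
    left; apply Rinv_0_lt_compat; lra. }
  pose proof (Rle_abs ((f (x + del / 2) - f x) / (del / 2) - d)); lra.
Qed.

Lemma ratio_le a b a' b' : 0 < a -> 0 < b' -> a <= a' -> b' <= b ->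
  a / (a + b) <= a' / (a' + b').
Proof.
  intros Ha Hb' Haa' Hbb'.
  assert (E : a' / (a' + b') - a / (a + b) = (a' * b - a * b') / ((a + b) * (a' + b')))
    by (field; lra).
  assert (0 <= (a' * b - a * b') / ((a + b) * (a' + b'))).
  { unfold Rdiv; apply Rmult_le_pos; [nra|].
    left; apply Rinv_0_lt_compat; nra. }
  lra.
Qed.

Lemma wet_of_derivable f l x : (forall s, exists d, derivable_pt_lim f s d) ->
  exists d, derivable_pt_lim (fun x => f (wet_of l x)) x d.
Proof.
  intros Hf; destruct l; simpl.
  - exact (Hf x).
  - destruct (Hf (1 - x)) as [d Hd]; exists (d * (0 - 1)).
    apply (derivable_pt_lim_comp (fun x => 1 - x) f).
    + apply derivable_pt_lim_minus; [apply derivable_pt_lim_const | apply derivable_pt_lim_id].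
    + exact Hd.
Qed.

Section MobilityRatio.

Variables lw lnw : R -> R.
Hypothesis hlw_pos : forall s, 0 < lw s.
Hypothesis hlnw_pos : forall s, 0 < lnw s.
Hypothesis hlw_der : forall s, exists d, derivable_pt_lim lw s d.
Hypothesis hlnw_der : forall s, exists d, derivable_pt_lim lnw s d.
Hypothesis hlw_mono : forall x y, x <= y -> lw x <= lw y.
Hypothesis hlnw_mono : forall x y, x <= y -> lnw y <= lnw x.

Definition mobility_ratio (l : phase) (x : R) : R :=
  mob lw lnw l (wet_of l x) / (lw (wet_of l x) + lnw (wet_of l x)).

Lemma mobility_ratio_nondecreasing l x y : x <= y ->
  mobility_ratio l x <= mobility_ratio l y.
Proof.
  intros Hxy; unfold mobility_ratio; destruct l; simpl.
  - apply ratio_le; auto.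
  - rewrite !(Rplus_comm (lw _)).
    apply ratio_le; auto; [apply hlnw_mono | apply hlw_mono]; lra.
Qed.

Lemma mobility_ratio_derivable l x : exists D, derivable_pt_lim (mobility_ratio l) x D.
Proof.
  destruct (wet_of_derivable lw l x hlw_der) as [dw Hw].
  destruct (wet_of_derivable lnw l x hlnw_der) as [dn Hn].
  assert (Hnum : exists d, derivable_pt_lim (fun x => mob lw lnw l (wet_of l x)) x d)
    by (destruct l; [exists dw | exists dn]; assumption).
  destruct Hnum as [dm Hm].
  eexists; apply (derivable_pt_lim_div _ (fun x => lw (wet_of l x) + lnw (wet_of l x)));
    [exact Hm | exact (derivable_pt_lim_plus _ _ _ _ _ Hw Hn) |].
  pose proof (hlw_pos (wet_of l x)); pose proof (hlnw_pos (wet_of l x)); lra.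
Qed.

Lemma mobility_ratio_derivative_ge0 l x :
  exists D, derivable_pt_lim (mobility_ratio l) x D /\ 0 <= D.
Proof.
  destruct (mobility_ratio_derivable l x) as [D HD]; exists D; split; [exact HD|].
  exact (derivable_pt_lim_nondecreasing_ge0 _ _ _ (mobility_ratio_nondecreasing l) HD).
Qed.

End MobilityRatio.

Lemma Vbar_upd_affine u lw lnw l S j i : (j < 4)%nat ->
  exists K, forall s, Vbar u lw lnw l (upd S j s) i
                      = K + mob lw lnw l s / (lw s + lnw s) * (u i * invAB u i j).
Proof.
  intros Hj.
  exists (sum4 (fun a => inv4 (matA u) i a *
            sum4 (fun m => matB u a m * (if Nat.eqb m j then 0 else chi lw lnw l S m))) * u i).
  intros s; unfold Vbar, chibar, invAB.
  generalize (inv4 (matA u)) (matB u); intros IA MB.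
  unfold chi, upd, sum4.
  destruct j as [|[|[|[|j]]]]; try lia; simpl; ring.
Qed.

Theorem mainTheorem4
  (u : nat -> R) (lw lnw : R -> R)
  (hlw_pos : forall s, 0 < lw s) (hlnw_pos : forall s, 0 < lnw s)
  (hlw_der : forall s, exists d, derivable_pt_lim lw s d)
  (hlnw_der : forall s, exists d, derivable_pt_lim lnw s d)
  (hlw_mono : forall x y, x <= y -> lw x <= lw y)
  (hlnw_mono : forall x y, x <= y -> lnw y <= lnw x)
  (l : phase) (k j : nat) (hk : (k < 4)%nat) (hj : (j < 4)%nat) (hjk : j <> k)
  (S : nat -> R) :
  exists d : R,
    derivable_pt_lim
      (fun x => Vbar u lw lnw l (upd S j (wet_of l x)) k
              - Vbar u lw lnw l (upd S j (wet_of l x)) (prv k))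
      (phase_sat l (S j)) d
    /\ d <= 0.
Proof.
  destruct (mobility_ratio_derivative_ge0 lw lnw hlw_pos hlnw_pos hlw_der hlnw_der
              hlw_mono hlnw_mono l (phase_sat l (S j))) as [D [HD HD0]].
  destruct (Vbar_upd_affine u lw lnw l S j k hj) as [K HK].
  destruct (Vbar_upd_affine u lw lnw l S j (prv k) hj) as [K' HK'].
  pose proof (flux_slope_jump_le0 u k j hk hj hjk) as Hc.
  set (c := u k * invAB u k j - u (prv k) * invAB u (prv k) j) in Hc.
  exists (c * D); split; [|nra].
  apply derivable_pt_lim_ext with (fun x => (K - K') + c * mobility_ratio lw lnw l x).
  { intros x; rewrite HK, HK'; unfold mobility_ratio, c; ring. }
  replace (c * D) with (0 + c * D) by ring.
  apply (derivable_pt_lim_plus (fun _ => K - K') (fun x => c * mobility_ratio lw lnw l x)).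
  - apply derivable_pt_lim_const.
  - now apply derivable_pt_lim_scal.
Qed.
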